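(* Let $C$ be a finite normal flag simplicial complex of dimension $d$ with $n$ vertices. Then $C$ satisfies the non-revisiting path property; in particular $\operatorname{diam}(C)\le n-d-1$.
   Context: A simplicial complex is flag if every inclusion-minimal set of vertices that does not form a face has exactly $2$ elements. For a face $\sigma$ of $C$, the star $\mathrm{St}(\sigma,C)$ is the smallest subcomplex of $C$ containing all faces of $C$ that contain $\sigma$. For a pure simplicial $d$-complex $C$, the dual graph (facet-ridge graph) $G^\ast(C)$ has the $d$-faces (facets) of $C$ as vertices, two facets being adjacent if they intersect in a $(d-1)$-face. A pure simplicial complex $C$ is normal if $G^\ast(\mathrm{St}(\sigma,C))$ is connected for every face $\sigma$ of $C$, including the empty face (whose star is $C$). $\operatorname{diam}(C)$ is the diameter of $G^\ast(C)$. A facet path is a map $\Gamma$ from an integer interval $I$ to the set of facets such that consecutive facets $\Gamma(i),\Gamma(i+1)$ intersect in a $(d-1)$-face. A facet path $\Gamma$ is non-revisiting if whenever $\Gamma(i)$ and $\Gamma(j)$ both lie in $\mathrm{St}(v,C)$ for some vertex $v$, then $\Gamma(k)\in\mathrm{St}(v,C)$ for all $k$ between $i$ and $j$. $C$ has the non-revisiting path property if any two facets of $C$ are joined by a non-revisiting facet path. *)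

From mathcomp Require Import all_boot.
Set Implicit Arguments. Unset Strict Implicit. Unset Printing Implicit Defensive.

Section Complexes.
Variable V : finType.
Implicit Types (C K : {set {set V}}) (s F G : {set V}).

Definition simplicial_complex C : Prop :=
  set0 \in C /\ forall F G, F \in C -> G \subset F -> G \in C.

(* every element of V is a vertex of C (so C has #|V| vertices) *)
Definition vertex_set_is_V C : Prop := forall v : V, [set v] \in C.

Definition has_dim C (d : nat) : Prop :=
  (exists2 F, F \in C & #|F| = d.+1) /\ (forall F, F \in C -> #|F| <= d.+1).

Definition flag C : Prop :=
  forall S : {set V}, S \notin C -> (forall T : {set V}, T \proper S -> T \in C) -> #|S| = 2.

Definition facet K F : Prop := F \in K /\ forall G, G \in K -> F \subset G -> G = F.

Definition pure K (d : nat) : Prop := forall F, facet K F -> #|F| = d.+1.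

(* star of a face s: the smallest subcomplex containing all faces containing s,
   i.e. the faces T with T :|: s a face *)
Definition star s C : {set {set V}} := [set T in C | (T :|: s) \in C].

(* adjacency in the dual graph of a pure d-complex: facets meeting in a (d-1)-face *)
Definition dual_adj (d : nat) F G : bool := #|F :&: G| == d.

Definition facet_path K (d : nat) F (p : seq {set V}) : Prop :=
  facet K F /\ (forall G, G \in p -> facet K G) /\ path (dual_adj d) F p.

Definition dual_connected K (d : nat) : Prop :=
  forall F G, facet K F -> facet K G ->
    exists p, facet_path K d F p /\ last F p = G.

(* normal: pure, and the dual graph of every star (incl. of the empty face) is connected *)
Definition normal C (d : nat) : Prop :=
  pure C d /\ forall s, s \in C -> dual_connected (star s C) d.

Definition non_revisiting C (F : {set V}) (p : seq {set V}) : Prop :=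
  let q := F :: p in
  forall (v : V) (i j k : nat), i <= k -> k <= j -> j < size q ->
    nth set0 q i \in star [set v] C -> nth set0 q j \in star [set v] C ->
    nth set0 q k \in star [set v] C.

Definition non_revisiting_path_property C (d : nat) : Prop :=
  forall F G, facet C F -> facet C G ->
    exists p, [/\ facet_path C d F p, last F p = G & non_revisiting C F p].

Definition diam_le C (d m : nat) : Prop :=
  forall F G, facet C F -> facet C G ->
    exists p, [/\ facet_path C d F p, last F p = G & size p <= m].

End Complexes.

From mathcomp Require Import all_boot zify.

(* By downward induction on a face B, any two facets F, G containing B are joined by a
   nonrevisiting path of facets containing B.  If F <> G, first "approach" S := G \ B:
   walk from F to a facet F' meeting S in some y, in such a way that no vertex abandoned on
   the way is a neighbour of y in the link of B; then join F' to G inside the star of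
   B + y.  The abandoned vertices cannot come back there, as they are not adjacent to y.

   Approaches are built by the same downward induction on B and, inside it, by induction
   on the distance in the link of B from S to a vertex w of F.  If no vertex of F is closer
   to S than w, approach, within the star of B + w, the neighbours of w that are closer to
   S, and continue from there by induction.  Normality (connectedness of the dual graph
   of the star of B) makes this distance finite when dim B < d - 1; flagness is used to
   lift link edges of B between faces containing w to link edges of B + w.

   A nonrevisiting path abandons one vertex for good at each step, whence the bound
   n - d - 1 on the diameter. *)

Set Implicit Arguments. Unset Strict Implicit. Unset Printing Implicit Defensive.

Section NonrevisitingSeq.
Variable V : finType.
Implicit Types (F G : {set V}) (p q : seq {set V}).

Definition nonrevisiting_seq q := forall v i j k, i <= k -> k <= j -> j < size q ->
  v \in nth set0 q i -> v \in nth set0 q j -> v \in nth set0 q k.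

Lemma nonrevisiting_seq1 F : nonrevisiting_seq [:: F].
Proof. by move=> v i j k ik kj /= jl; have -> : k = i by lia. Qed.

Lemma nonrevisiting_seq2 F G : nonrevisiting_seq [:: F; G].
Proof.
move=> v i j k ik kj /= jl.
have /orP[] : (k == i) || (k == j) by lia.
  by move/eqP->.
by move/eqP->.
Qed.

Lemma nonrevisiting_seq_behead F p : nonrevisiting_seq (F :: p) -> nonrevisiting_seq p.
Proof. by move=> h v i j k ik kj jl; apply: (h v i.+1 j.+1 k.+1). Qed.

Lemma nth_cons_catl F p1 p2 i : i <= size p1 ->
  nth set0 (F :: p1 ++ p2) i = nth set0 (F :: p1) i.
Proof. by move=> hi; rewrite -cat_cons nth_cat /= ltnS hi. Qed.

Lemma nth_cons_catr F p1 p2 i : size p1 <= i ->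
  nth set0 (F :: p1 ++ p2) i = nth set0 (last F p1 :: p2) (i - size p1).
Proof.
move=> hi; rewrite -cat_cons nth_cat /= ltnS.
case: (ltngtP i (size p1)) hi => // [lt|->] _.
  by have -> : i - size p1 = (i - (size p1).+1).+1 by lia.
by rewrite subnn /= (nth_last set0 (F :: p1)).
Qed.

Lemma nonrevisiting_seq_cat F p1 p2 :
  nonrevisiting_seq (F :: p1) -> nonrevisiting_seq (last F p1 :: p2) ->
  (forall v, (exists2 G, G \in F :: p1 & v \in G) ->
             (exists2 G, G \in last F p1 :: p2 & v \in G) -> v \in last F p1) ->
  nonrevisiting_seq (F :: p1 ++ p2).
Proof.
move=> nr1 nr2 shared v i j k ik kj; rewrite /= size_cat => jl.
have lastE : nth set0 (F :: p1) (size p1) = last F p1 by have := nth_last set0 (F :: p1).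
have [jp1|p1j] := leqP j (size p1).
  rewrite !nth_cons_catl; try lia; exact: nr1.
have [p1i|ip1] := leqP (size p1) i.
  rewrite !nth_cons_catr; try lia.
  by apply: nr2 => /=; lia.
rewrite nth_cons_catl 1?nth_cons_catr; try lia.
move=> vi vj; have vl : v \in last F p1.
  apply: shared.
  - by exists (nth set0 (F :: p1) i) => //; apply: mem_nth => /=; lia.
  - by exists (nth set0 (last F p1 :: p2) (j - size p1)) => //; apply: mem_nth => /=; lia.
have [kp1|p1k] := leqP k (size p1).
  by rewrite nth_cons_catl //; apply: (nr1 v i (size p1)) => //; rewrite lastE.
by rewrite nth_cons_catr; [apply: (nr2 v 0 (j - size p1)) => /=; lia | lia].
Qed.

(* Each step abandons a vertex of the previous set, which never reappears. *)
Lemma card_bigcup_nonrevisiting (d : nat) F p :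
  (forall G, G \in F :: p -> #|G| = d.+1) -> path (dual_adj d) F p ->
  nonrevisiting_seq (F :: p) -> d.+1 + size p <= #|\bigcup_(G <- F :: p) G|.
Proof.
elim: p F => [|G p IH] F card_p adj_p nr_p; first by rewrite big_seq1 addn0 card_p ?mem_head.
move: adj_p => /= /andP[adjFG adj_p].
have IHG := IH G (fun H hH => card_p H (@mem_behead _ (F :: G :: p) _ hH)) adj_p
  (nonrevisiting_seq_behead nr_p).
have /subsetPn [x xF xG] : ~~ (F \subset G).
  apply/negP => sFG; move: adjFG; rewrite /dual_adj (setIidPl sFG) card_p ?mem_head //.
  by move/eqP; lia.
have xU : x \notin \bigcup_(H <- G :: p) H.
  rewrite bigcup_seq; apply/bigcupP => -[H Hin xH].
  have jl : (index H (G :: p)).+1 < size (F :: G :: p) by rewrite ltnS index_mem.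
  have := nr_p x 0 _ 1 (leq0n _) (ltn0Sn _) jl xF.
  by rewrite /= (nth_index set0 Hin) (negbTE xG) => /(_ xH).
have : x |: \bigcup_(H <- G :: p) H \subset \bigcup_(H <- F :: G :: p) H.
  have -> : \bigcup_(H <- F :: G :: p) H = F :|: \bigcup_(H <- G :: p) H by rewrite big_cons.
  by rewrite setSU // sub1set.
move/subset_leq_card; rewrite cardsU1 xU /=; move: IHG => /=; lia.
Qed.

End NonrevisitingSeq.

Lemma superset_ind (T : finType) (P : {set T} -> Prop) :
  (forall B : {set T}, (forall x, x \notin B -> P (x |: B)) -> P B) -> forall B, P B.
Proof.
move=> IH B; move: {2}#|~: B| (leqnn #|~: B|) => m.
elim: m B => [|m IHm] B hB; apply: IH => x xB;
  have := cardsC B; have := cardsC (x |: B); rewrite cardsU1 xB.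
  lia.
by move=> h1 h2; apply: IHm; lia.
Qed.

Lemma meetsP (T : finType) (A B : {set T}) :
  reflect (exists2 x, x \in A & x \in B) (~~ [disjoint A & B]).
Proof.
rewrite -setI_eq0; apply: (iffP (set0Pn _)) => [[x]|[x xA xB]].
  by rewrite inE => /andP[]; exists x.
by exists x; rewrite inE xA xB.
Qed.

Lemma flag_clique_face (V : finType) (C : {set {set V}}) :
  flag C -> forall X : {set V},
  (forall a b, a \in X -> b \in X -> [set a; b] \in C) -> X \in C.
Proof.
move=> flagC X; move: {2}#|X| (leqnn #|X|) => m.
elim: m X => [|m IH] X hX clqX; apply: contraT => XC.
  have noT (T : {set V}) : T \proper X -> T \in C by move/proper_card; lia.
  by have := flagC X XC noT; lia.
have properC (T : {set V}) : T \proper X -> T \in C.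
  move=> TX; apply: IH; first by have := proper_card TX; lia.
  by move=> a b aT bT; apply: clqX; apply: (subsetP (proper_sub TX)).
have /eqP/cards2P [a [b [_ eX]]] := flagC X XC properC.
by move: XC; rewrite eX clqX // eX !inE eqxx ?orbT.
Qed.

Section NormalFlag.
Variables (V : finType) (C : {set {set V}}) (d : nat).
Hypothesis face_closed : forall F G : {set V}, F \in C -> G \subset F -> G \in C.
Hypothesis clique_face : forall X : {set V},
  (forall a b, a \in X -> b \in X -> [set a; b] \in C) -> X \in C.
Hypothesis pureC : pure C d.
Hypothesis star_connected : forall s, s \in C -> dual_connected (star s C) d.

Implicit Types (A B S F G H : {set V}) (p : seq {set V}) (x y z v w : V) (k : nat).

Lemma facet_face F : facet C F -> F \in C.
Proof. by case. Qed.

Lemma facet_maximal F G : facet C F -> G \in C -> F \subset G -> G = F.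
Proof. by case=> _; apply. Qed.

Lemma face_sub_facet A : A \in C -> exists2 F, facet C F & A \subset F.
Proof.
move=> AC; pose P := [pred X : {set V} | (X \in C) && (A \subset X)].
have [|X /andP[XC AX] Xmax] := @arg_maxnP _ A P (fun X => #|X|); first by rewrite /= AC subxx.
exists X => //; split=> // G GC XG; apply/eqP; rewrite eq_sym eqEcard XG /=.
by apply: Xmax; rewrite /= GC (subset_trans AX XG).
Qed.

Lemma card_face A : A \in C -> #|A| <= d.+1.
Proof. by case/face_sub_facet=> F /pureC <-; apply: subset_leq_card. Qed.

Lemma facet_star s G : s \in C -> facet (star s C) G <-> facet C G /\ s \subset G.
Proof.
move=> sC; split=> [[]|[[GC Gmax] sG]].
  rewrite inE => /andP[GC GsC] Gmax.
  have sG : s \subset G.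
    by rewrite -(Gmax (G :|: s)) ?subsetUr ?subsetUl // inE GsC -setUA setUid GsC.
  split=> //; split=> // G' G'C GG'; apply: Gmax => //.
  by rewrite inE G'C (setUidPl (subset_trans sG GG')).
split; first by rewrite inE GC (setUidPl sG) GC.
by move=> G'; rewrite inE => /andP[G'C _]; apply: Gmax.
Qed.

Lemma facet_in_star1 v G : facet C G -> (G \in star [set v] C) = (v \in G).
Proof.
move=> fG; rewrite inE (facet_face fG) /=; apply/idP/idP => [vGC|vG].
  by rewrite -(facet_maximal fG vGC (subsetUl _ _)) !inE eqxx orbT.
by rewrite (setUidPl _) ?(facet_face fG) // sub1set.
Qed.

Lemma face_setU A1 A2 : A1 \in C -> A2 \in C ->
  (forall a b, a \in A1 :\: A2 -> b \in A2 :\: A1 -> [set a; b] \in C) -> A1 :|: A2 \in C.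
Proof.
move=> A1C A2C cross; apply: clique_face => a b.
have edge X : X \in C -> a \in X -> b \in X -> [set a; b] \in C.
  by move=> XC aX bX; apply: face_closed XC _; rewrite subUset !sub1set aX.
rewrite !inE; case: (boolP (a \in A1)) => aA1; case: (boolP (b \in A1)) => bA1 //=.
- by move=> _ _; apply: edge A1C aA1 bA1.
- move=> _ bA2; have [aA2|aA2] := boolP (a \in A2); first exact: edge A2C aA2 bA2.
  by apply: cross; rewrite inE ?aA1 ?bA2 ?aA2 ?bA1.
- move=> aA2 _; have [bA2|bA2] := boolP (b \in A2); first exact: edge A2C aA2 bA2.
  by rewrite setUC; apply: cross; rewrite inE ?aA1 ?bA2 ?aA2 ?bA1.
- by move=> aA2 bA2; apply: edge A2C aA2 bA2.
Qed.

Definition link_edge B x y := [&& x \notin B, y \notin B, x != y & [set x; y] :|: B \in C].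

Lemma link_edge_face B x y : link_edge B x y -> [set x; y] :|: B \in C.
Proof. by case/and4P. Qed.

Lemma face_link_edge A B x y : A \in C -> B \subset A -> x \in A -> y \in A ->
  x \notin B -> y \notin B -> x != y -> link_edge B x y.
Proof.
move=> AC BA xA yA xB yB xy; rewrite /link_edge xB yB xy /=.
by apply: face_closed AC _; rewrite !subUset !sub1set xA yA BA.
Qed.

Lemma link_edge_setU1 B G H w x y : G \in C -> H \in C ->
  w |: B \subset G -> w |: B \subset H -> x \in G -> y \in H -> x != w -> y != w ->
  link_edge B x y -> link_edge (w |: B) x y.
Proof.
move=> GC HC wBG wBH xG yH xw yw /and4P[xB yB xy xyBC].
rewrite /link_edge !inE (negbTE xw) (negbTE yw) xB yB xy /=.
have -> : [set x; y] :|: (w |: B) = (x |: (w |: B)) :|: (y |: (w |: B)).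
  apply/setP => z; rewrite !inE.
  by case: (z == x); case: (z == y); case: (z == w); case: (z \in B).
apply: face_setU.
- by apply: face_closed GC _; rewrite subUset sub1set xG wBG.
- by apply: face_closed HC _; rewrite subUset sub1set yH wBH.
- move=> a b; rewrite !inE => /andP[aN /orP[/eqP->|aw]]; last by rewrite aw !orbT in aN.
  move=> /andP[bN /orP[/eqP->|bw]]; last by rewrite bw !orbT in bN.
  by apply: face_closed xyBC _; apply: subsetUl.
Qed.

Fixpoint link_ball B S k : {set V} :=
  if k is k'.+1 then
    link_ball B S k' :|: [set x | [exists y in link_ball B S k', link_edge B x y]]
  else S.

Lemma link_ball_subS B S k : link_ball B S k \subset link_ball B S k.+1.
Proof. exact: subsetUl. Qed.

Lemma link_ball_mono B S k k' : k <= k' -> link_ball B S k \subset link_ball B S k'.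
Proof.
move/subnKC <-; elim: (k' - k) => [|m IH]; first by rewrite addn0.
by rewrite addnS (subset_trans IH (link_ball_subS _ _ _)).
Qed.

Lemma sub_link_ball B S k : S \subset link_ball B S k.
Proof. exact: (link_ball_mono B S (leq0n k)). Qed.

Lemma link_ball_edge B S k x y :
  y \in link_ball B S k -> link_edge B x y -> x \in link_ball B S k.+1.
Proof.
by move=> yR xy; rewrite inE; apply/orP; right; rewrite inE; apply/existsP; exists y; rewrite yR.
Qed.

Lemma link_ball_succ B S k x : x \in link_ball B S k.+1 -> x \notin link_ball B S k ->
  exists2 y, y \in link_ball B S k & link_edge B x y.
Proof. by rewrite inE => /orP[->//|]; rewrite inE => /existsP[y /andP[yR xy]]; exists y. Qed.

Lemma notin_link_ball B S k x : [disjoint S & B] -> x \in link_ball B S k -> x \notin B.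
Proof.
move=> SB; elim: k => [|k IH] /=; first by move/(disjointFr SB)->.
by rewrite !inE => /orP[/IH//|/existsP[y /andP[_ /and4P[]]]].
Qed.

Lemma facet_sub_link_ball B S F H y : [disjoint S & B] ->
  facet C F -> B \subset F -> facet C H -> B \subset H -> y \in H -> y \in S -> #|B| < d ->
  exists k, F :\: B \subset link_ball B S k.
Proof.
move=> SB fF BF fH BH yH yS ltBd.
have BC : B \in C := face_closed (facet_face fF) BF.
have [p [[_ [fp adj_p]] lastp]] :=
  star_connected BC ((facet_star F BC).2 (conj fF BF)) ((facet_star H BC).2 (conj fH BH)).
elim: p F fF BF fp adj_p lastp => [|G p IHp] F fF BF fp /=.
  move=> _ ->; exists 1; apply/subsetP => x; rewrite inE => /andP[xB xH].
  have [->|xy] := eqVneq x y; first exact: (subsetP (sub_link_ball _ _ _)).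
  have yB : y \notin B by rewrite (disjointFr SB yS).
  exact: (link_ball_edge (k := 0) yS (face_link_edge (facet_face fH) BH xH yH xB yB xy)).
move=> /andP[adjFG adj_p] lastp.
have [fG BG] := (facet_star G BC).1 (fp G (mem_head _ _)).
have [k GR] := IHp G fG BG (fun G' h => fp G' (@mem_behead _ (G :: p) _ h)) adj_p lastp.
have /subsetPn [z] : ~~ (F :&: G \subset B).
  by apply/negP => /subset_leq_card; move: adjFG => /eqP ->; rewrite leqNgt ltBd.
rewrite inE => /andP[zF zG] zB.
have zR : z \in link_ball B S k by apply: (subsetP GR); rewrite inE zB zG.
exists k.+1; apply/subsetP => x; rewrite inE => /andP[xB xF].
have [->|xz] := eqVneq x z; first exact: (subsetP (link_ball_subS _ _ _)).
exact: link_ball_edge zR (face_link_edge (facet_face fF) BF xF zF xB zB xz).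
Qed.

Lemma dual_adj_of_card B F H : facet C F -> facet C H -> F != H ->
  B \subset F -> B \subset H -> #|B| = d -> dual_adj d F H.
Proof.
move=> fF fH FH BF BH cardB; rewrite /dual_adj eqn_leq; apply/andP; split.
  have : F :&: H \proper F.
    rewrite properEneq subsetIl andbT; apply: contra FH => /eqP eFH.
    by rewrite -(facet_maximal fF (facet_face fH)) // -eFH subsetIr.
  by move/proper_card; rewrite (pureC fF).
by rewrite -cardB subset_leq_card // subsetI BF BH.
Qed.

(* An approach from [F] to [S] inside the star of [B]: a nonrevisiting facet path whose
   last facet is the only one meeting [S], and such that no vertex abandoned on the way is
   a link neighbour of a vertex of [S] in the last facet.  The latter guarantees that the
   abandoned vertices lie in no facet containing [B] and such a vertex. *)
Record approach B S F p : Prop := Approach {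
  approach_facets : forall G, G \in F :: p -> facet C G /\ B \subset G;
  approach_path : path (dual_adj d) F p;
  approach_nonrev : nonrevisiting_seq (F :: p);
  approach_hit : ~~ [disjoint last F p & S];
  approach_hit_last : forall G, G \in F :: p -> ~~ [disjoint G & S] -> G = last F p;
  approach_abandon : forall G x y, G \in F :: p -> x \in G -> x \notin last F p ->
    y \in last F p -> y \in S -> ~~ link_edge B x y }.

Lemma approach_nil B S F : facet C F -> B \subset F -> ~~ [disjoint F & S] ->
  approach B S F [::].
Proof.
move=> fF BF FS; split=> //=.
- by move=> G; rewrite inE => /eqP->.
- exact: nonrevisiting_seq1.
- by move=> G; rewrite inE => /eqP->.
- by move=> G x y; rewrite inE => /eqP-> ->.
Qed.

Definition approachable B := forall S F, [disjoint S & B] -> facet C F -> B \subset F ->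
  (exists2 H, facet C H /\ B \subset H & ~~ [disjoint H & S]) -> exists p, approach B S F p.

Lemma approach_ridge B S F H : #|B| = d -> facet C F -> B \subset F ->
  facet C H -> B \subset H -> [disjoint F & S] -> ~~ [disjoint H & S] ->
  approach B S F [:: H].
Proof.
move=> cardB fF BF fH BH FS HS.
have FH : F != H by apply: contraNneq HS => <-.
split=> //=.
- by move=> G; rewrite !inE => /orP[] /eqP->.
- by rewrite (dual_adj_of_card fF fH FH BF BH cardB).
- exact: nonrevisiting_seq2.
- by move=> G; rewrite !inE => /orP[] /eqP-> //; rewrite FS.
move=> G x z; rewrite !inE => /orP[] /eqP-> xG; last by rewrite xG.
move=> xH zH zS; apply/negP => xz_edge; have /and4P[xB zB xz _] := xz_edge.
have := card_face (link_edge_face xz_edge).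
by rewrite -setUA !cardsU1 !inE negb_or xz xB zB cardB /= add1n ltnn.
Qed.

Section Approach.
Variable B : {set V}.
Hypothesis approachable_succ : forall x, x \notin B -> approachable (x |: B).

Section Target.
Variable S : {set V}.
Hypothesis SB : [disjoint S & B].

(* The strengthened induction hypothesis of [approach_from_ball]: all the vertices met
   farther than [k] from [S] are link neighbours of a single vertex [w] of the first facet. *)
Definition tethered k w F p := forall G x, G \in F :: p -> x \in G -> x \notin B ->
  x \notin link_ball B S k -> link_edge B x w.

Lemma tetheredS k w F p : tethered k w F p -> tethered k.+1 w F p.
Proof.
move=> teth G x GFp xG xB xR; apply: teth GFp xG xB _.
by apply: contra xR; apply: (subsetP (link_ball_subS _ _ _)).
Qed.

Definition ball_nbrs k w := [set x in link_ball B S k | link_edge B w x].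

Lemma ball_nbrs_disjoint k w : w \notin link_ball B S k ->
  [disjoint ball_nbrs k w & w |: B].
Proof.
move=> wR; apply: contraT => /meetsP[x]; rewrite !inE => /andP[xR _] /orP[/eqP xw|xB].
  by move: wR; rewrite -xw xR.
by rewrite (negbTE (notin_link_ball SB xR)) in xB.
Qed.

Section Glue.
Variables (k : nat) (w w1 : V) (F : {set V}) (p0 p1 : seq {set V}).
Hypothesis wR : w \in link_ball B S k.+1.
Hypothesis wRk : w \notin link_ball B S k.
Hypothesis ap0 : approach (w |: B) (ball_nbrs k w) F p0.
Hypothesis ap1 : approach B S (last F p0) p1.
Hypothesis w1J : w1 \in last F p0.
Hypothesis w1R : w1 \in link_ball B S k.
Hypothesis teth1 : tethered k w1 (last F p0) p1.

Lemma facets_p0 G : G \in F :: p0 -> [/\ facet C G, B \subset G & w \in G].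
Proof.
case/(approach_facets ap0) => fG; rewrite subUset sub1set => /andP[wG BG].
by split.
Qed.

Lemma ball_nbrs_in_p0 G z : G \in F :: p0 -> z \in G -> z \in link_ball B S k ->
  z \in ball_nbrs k w.
Proof.
move=> GFp zG zR; have [fG BG wG] := facets_p0 GFp.
rewrite inE zR; apply: face_link_edge (facet_face fG) BG wG zG _ _ _.
- exact: notin_link_ball SB wR.
- exact: notin_link_ball SB zR.
- by apply: contraNneq wRk => ->.
Qed.

Lemma abandoned_p0_outside_ball G x : G \in F :: p0 -> x \in G -> x \notin last F p0 ->
  x \notin link_ball B S k.
Proof.
move=> GFp xG xJ; apply: contra xJ => xR.
have GS0 : ~~ [disjoint G & ball_nbrs k w].
  by apply/meetsP; exists x => //; apply: ball_nbrs_in_p0 GFp xG xR.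
by rewrite -(approach_hit_last ap0 GFp GS0).
Qed.

Lemma abandoned_p0_not_linked G x z : G \in F :: p0 -> x \in G -> x \notin last F p0 ->
  z \in last F p0 -> z \in ball_nbrs k w -> ~~ link_edge B x z.
Proof.
move=> GFp xG xJ zJ zS0; apply: contraNN (approach_abandon ap0 GFp xG xJ zJ zS0).
have [fG BG wG] := facets_p0 GFp; have [fJ BJ wJ] := facets_p0 (mem_last F p0).
apply: (link_edge_setU1 (facet_face fG) (facet_face fJ)) => //.
- by rewrite subUset sub1set wG.
- by rewrite subUset sub1set wJ.
- by apply: contraNneq xJ => ->.
- by move: zS0; rewrite inE => /andP[_ /and4P[_ _ wz _]]; rewrite eq_sym.
Qed.

Lemma approach_glue_nonrev : nonrevisiting_seq (F :: p0 ++ p1).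
Proof.
apply: nonrevisiting_seq_cat (approach_nonrev ap0) (approach_nonrev ap1) _.
move=> v [G GFp vG] [G' G'Fp vG']; apply: contraT => vJ.
have vB : v \notin B by apply: contra vJ; apply: subsetP; have [] := facets_p0 (mem_last F p0).
have := abandoned_p0_not_linked GFp vG vJ w1J (ball_nbrs_in_p0 (mem_last F p0) w1J w1R).
by rewrite (teth1 G'Fp vG' vB (abandoned_p0_outside_ball GFp vG vJ)).
Qed.

Lemma approach_glue_hit_last G : G \in F :: p0 ++ p1 -> ~~ [disjoint G & S] ->
  G = last F (p0 ++ p1).
Proof.
rewrite -cat_cons mem_cat last_cat => /orP[GFp|Gp1] GS; last first.
  by apply: (approach_hit_last ap1) GS; rewrite inE Gp1 orbT.
have [x xG xS] := meetsP _ _ GS.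
have xR : x \in link_ball B S k := subsetP (sub_link_ball _ _ _) x xS.
have GS0 : ~~ [disjoint G & ball_nbrs k w].
  by apply/meetsP; exists x; rewrite ?(ball_nbrs_in_p0 GFp).
have eG := approach_hit_last ap0 GFp GS0.
by rewrite eG; apply: (approach_hit_last ap1) (mem_head _ _) _; rewrite -eG.
Qed.

Lemma approach_glue_abandon G x z : G \in F :: p0 ++ p1 -> x \in G ->
  x \notin last F (p0 ++ p1) -> z \in last F (p0 ++ p1) -> z \in S -> ~~ link_edge B x z.
Proof.
rewrite -cat_cons mem_cat last_cat => /orP[GFp|Gp1] xG xL zL zS; last first.
  by apply: (approach_abandon ap1) xG xL zL zS; rewrite inE Gp1 orbT.
have [xJ|xJ] := boolP (x \in last F p0).
  exact: (approach_abandon ap1) (mem_head _ _) xJ xL zL zS.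
have xR := abandoned_p0_outside_ball GFp xG xJ.
have zR : z \in link_ball B S k := subsetP (sub_link_ball _ _ _) z zS.
have [zJ|zJ] := boolP (z \in last F p0).
  exact: abandoned_p0_not_linked GFp xG xJ zJ (ball_nbrs_in_p0 (mem_last F p0) zJ zR).
(* Here [last F p0] misses [S], so [w1] shows [k > 0], and an edge from [x] to [z \in S]
   would put [x] into the ball of radius [1 <= k]. *)
have JS : [disjoint last F p0 & S].
  apply: contraT => /(approach_hit_last ap1 (mem_head _ _)) eJ.
  by move: zL; rewrite -eJ (negbTE zJ).
have k_gt0 : 0 < k by case: k w1R => //= w1S; rewrite (disjointFr JS w1J) in w1S.
apply: contra xR => /(link_ball_edge (k := 0) zS).
exact: (subsetP (link_ball_mono _ _ k_gt0)).
Qed.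

Lemma approach_glue : approach B S F (p0 ++ p1).
Proof.
split.
- move=> G; rewrite -cat_cons mem_cat => /orP[/facets_p0[]//|GFp]; last first.
  by apply: (approach_facets ap1); rewrite inE GFp orbT.
- by rewrite cat_path (approach_path ap0) (approach_path ap1).
- exact: approach_glue_nonrev.
- by rewrite last_cat; apply: approach_hit ap1.
- exact: approach_glue_hit_last.
- exact: approach_glue_abandon.
Qed.

Lemma tethered_glue : tethered k.+1 w F (p0 ++ p1).
Proof.
move=> G x; rewrite -cat_cons mem_cat => /orP[GFp|Gp1] xG xB xR.
  have [fG BG wG] := facets_p0 GFp.
  apply: face_link_edge (facet_face fG) BG xG wG xB (notin_link_ball SB wR) _.
  by apply: contraNneq xR => ->.
have xRk : x \notin link_ball B S k.
  by apply: contra xR; apply: (subsetP (link_ball_subS _ _ _)).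
have G_p1 : G \in last F p0 :: p1 by rewrite inE Gp1 orbT.
by rewrite (link_ball_edge w1R (teth1 G_p1 xG xB xRk)) in xR.
Qed.

End Glue.

Lemma approach_from_ball k F w : facet C F -> B \subset F -> w \in F ->
  w \in link_ball B S k -> exists p, approach B S F p /\
  exists w', [/\ w' \in F, w' \in link_ball B S k & tethered k w' F p].
Proof.
elim: k F w => [|k IH] F w fF BF wF wR.
  exists [::]; split; first by apply: approach_nil => //; apply/meetsP; exists w.
  exists w; split=> // G x; rewrite inE => /eqP-> xF xB xS.
  apply: face_link_edge (facet_face fF) BF xF wF xB (notin_link_ball SB wR) _.
  by apply: contraNneq xS => ->.
have [Fk|/meetsP[x xF xR]] := boolP [disjoint F & link_ball B S k]; last first.
  have [p [ap [w' [w'F w'R teth]]]] := IH F x fF BF xF xR.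
  exists p; split=> //; exists w'; split=> //; last exact: tetheredS.
  exact: (subsetP (link_ball_subS _ _ _)).
(* [F] first moves, inside the star of [w |: B], to a facet containing a neighbour of [w]
   that is closer to [S], and from there continues by induction. *)
have wRk : w \notin link_ball B S k by rewrite (disjointFr Fk wF).
have [y yR wy] := link_ball_succ wR wRk.
have [H fH wyBH] := face_sub_facet (link_edge_face wy).
have wBF : w |: B \subset F by rewrite subUset sub1set wF.
have wBH : w |: B \subset H by apply: subset_trans wyBH; rewrite setSU // sub1set !inE eqxx.
have HS0 : ~~ [disjoint H & ball_nbrs k w].
  by apply/meetsP; exists y; [apply: (subsetP wyBH); rewrite !inE eqxx orbT | rewrite inE yR].
have [p0 ap0] := approachable_succ (notin_link_ball SB wR) (ball_nbrs_disjoint wRk) fF wBF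
  (ex_intro2 _ _ H (conj fH wBH) HS0).
have [y' y'J] := meetsP _ _ (approach_hit ap0); rewrite inE => /andP[y'R _].
have [fJ BJ] : facet C (last F p0) /\ B \subset last F p0.
  by have [fJ] := approach_facets ap0 (mem_last F p0); rewrite subUset => /andP[_].
have [p1 [ap1 [w1 [w1J w1R teth1]]]] := IH _ y' fJ BJ y'J y'R.
exists (p0 ++ p1); split; first exact: approach_glue wR wRk ap0 ap1 w1J w1R teth1.
by exists w; split=> //; apply: tethered_glue wR ap0 w1R teth1.
Qed.

End Target.

Lemma approachable_step : approachable B.
Proof.
move=> S F SB fF BF [H [fH BH] HS].
have [FS|FS] := boolP [disjoint F & S]; last by exists [::]; apply: approach_nil.
have [y yH yS] := meetsP _ _ HS.
case: (ltngtP #|B| d) => [ltBd|gtBd|eqBd].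
- have [k Fk] := facet_sub_link_ball SB fF BF fH BH yH yS ltBd.
  have /subsetPn [w wF wB] : ~~ (F \subset B).
    by apply/negP => /subset_leq_card; rewrite (pureC fF); lia.
  have wFB : w \in F :\: B by rewrite inE wB.
  by have [p [ap _]] := approach_from_ball SB fF BF wF (subsetP Fk w wFB); exists p.
- have eBF : B = F by apply/eqP; rewrite eqEcard BF (pureC fF).
  have eHF : H = F by apply: facet_maximal fF (facet_face fH) _; rewrite -eBF.
  by rewrite eHF FS in HS.
- by exists [:: H]; apply: approach_ridge.
Qed.

End Approach.

Lemma approachable_all B : approachable B.
Proof. exact: superset_ind approachable_step B. Qed.

Definition nonrev_connected B := forall F G, facet C F -> facet C G ->
  B \subset F -> B \subset G ->
  exists p, [/\ forall H, H \in F :: p -> facet C H /\ B \subset H,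
    path (dual_adj d) F p, last F p = G & nonrevisiting_seq (F :: p)].

(* Approach [S = G :\: B], reaching some [y \in G :\: B]; then connect to [G] within the
   star of [y |: B].  The abandoned vertices are not link neighbours of [y], so they cannot
   lie in any facet of that star. *)
Lemma nonrev_connected_step B :
  (forall x, x \notin B -> nonrev_connected (x |: B)) -> nonrev_connected B.
Proof.
move=> IHB F G fF fG BF BG.
have [<-|FG] := eqVneq F G.
  by exists [::]; split=> //= [H|]; [rewrite inE => /eqP-> | exact: nonrevisiting_seq1].
have /subsetPn [y0 y0G y0B] : ~~ (G \subset B).
  by apply: contra FG => GB; rewrite (facet_maximal fG (facet_face fF) (subset_trans GB BF)).
have SB : [disjoint G :\: B & B].
  by apply: contraT => /meetsP[x]; rewrite inE => /andP[/negbTE->].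
have GS : ~~ [disjoint G & G :\: B] by apply/meetsP; exists y0; rewrite // inE y0B.
have [p0 ap0] := approachable_all SB fF BF (ex_intro2 _ _ G (conj fG BG) GS).
have [y yJ] := meetsP _ _ (approach_hit ap0); rewrite inE => /andP[yB yG].
have [fJ BJ] := approach_facets ap0 (mem_last F p0).
have [||p1 [facets1 path1 last1 nr1]] := IHB y yB (last F p0) G fJ fG.
- by rewrite subUset sub1set yJ.
- by rewrite subUset sub1set yG.
exists (p0 ++ p1); split.
- move=> H; rewrite -cat_cons mem_cat => /orP[/(approach_facets ap0)//|Hp1].
  have [fH] := facets1 H (@mem_behead _ (_ :: p1) _ Hp1); rewrite subUset => /andP[_].
  by split.
- by rewrite cat_path (approach_path ap0).
- by rewrite last_cat.
apply: nonrevisiting_seq_cat (approach_nonrev ap0) nr1 _ => v [H0 H0p vH0] [H1 H1p vH1].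
apply: contraT => vJ.
have yS : y \in G :\: B by rewrite inE yB yG.
have [fH1] := facets1 H1 H1p; rewrite subUset sub1set => /andP[yH1 BH1].
have vB : v \notin B by apply: contra vJ; apply: (subsetP BJ).
have vy : v != y by apply: contraNneq vJ => ->.
have := approach_abandon ap0 H0p vH0 vJ yJ yS.
by rewrite (face_link_edge (facet_face fH1) BH1 vH1 yH1 vB yB vy).
Qed.

Lemma nonrev_connected_all B : nonrev_connected B.
Proof. exact: superset_ind nonrev_connected_step B. Qed.

Lemma nonrevisiting_facet_path F G : facet C F -> facet C G ->
  exists p, [/\ facet_path C d F p, last F p = G & nonrevisiting_seq (F :: p)].
Proof.
move=> fF fG; have [p [facets_p path_p last_p nr_p]] :=
  nonrev_connected_all fF fG (sub0set F) (sub0set G).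
exists p; split=> //; split=> //; split=> // H Hp.
by apply: (facets_p H (@mem_behead _ (F :: p) _ Hp)).1.
Qed.

Lemma non_revisiting_of_seq F p : facet C F -> (forall G, G \in p -> facet C G) ->
  nonrevisiting_seq (F :: p) -> non_revisiting C F p.
Proof.
move=> fF fp nr_p; rewrite /non_revisiting /= => v i j k ik kj jl.
have f_nth m : m < size (F :: p) -> facet C (nth set0 (F :: p) m).
  by move/(mem_nth set0); rewrite inE => /orP[/eqP->//|/fp].
rewrite !facet_in_star1; first exact: nr_p.
all: by apply: f_nth => /=; lia.
Qed.

Lemma size_nonrevisiting_path F p : facet_path C d F p -> nonrevisiting_seq (F :: p) ->
  size p <= #|V| - d - 1.
Proof.
case=> fF [fp path_p] nr_p.
have card_p G : G \in F :: p -> #|G| = d.+1.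
  by rewrite inE => /orP[/eqP->|/fp]; apply: pureC.
have := card_bigcup_nonrevisiting card_p path_p nr_p.
have := max_card (\bigcup_(G <- F :: p) G).
by move=> le_V /leq_trans /(_ le_V); lia.
Qed.

End NormalFlag.

Theorem theorem1p1 (V : finType) (C : {set {set V}}) (d n : nat) :
  simplicial_complex C -> vertex_set_is_V C -> #|V| = n ->
  has_dim C d -> normal C d -> flag C ->
  non_revisiting_path_property C d /\ diam_le C d (n - d - 1).
Proof.
move=> [_ face_closed] _ <- _ [pureC star_conn] flagC.
have clique := flag_clique_face flagC.
split=> F G fF fG; have [p [fpath last_p nr_p]] :=
  nonrevisiting_facet_path face_closed clique pureC star_conn fF fG.
- exists p; split=> //; case: fpath => _ [fp _].
  exact: non_revisiting_of_seq fF fp nr_p.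
- by exists p; split=> //; exact: (size_nonrevisiting_path pureC fpath nr_p).
Qed.
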